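(* Let $\Bbbk$ be a field. A quantum graded algebra with a straightening law $A$ on a finite poset $(\Pi,<_{\rm st})$ is noetherian and satisfies polynomial growth (PG).
   Context: Quantum graded A.S.L.: an $\mathbb N$-graded $\Bbbk$-algebra $A$ with a finite subset $\Pi$ partially ordered by $<_{\rm st}$ such that (1) elements of $\Pi$ are homogeneous of positive degree; (2) $\Pi$ generates $A$; (3) standard monomials ($1$ and $\alpha_1\cdots\alpha_s$, $\alpha_i\in\Pi$, $\alpha_1\le_{\rm st}\dots\le_{\rm st}\alpha_s$) are linearly independent; (4) for incomparable $\alpha,\beta\in\Pi$, $\alpha\beta$ is a linear combination of terms $\lambda$ or $\lambda\mu$, $\lambda,\mu\in\Pi$, $\lambda\le_{\rm st}\mu$, $\lambda<_{\rm st}\alpha,\beta$; (5) for all $\alpha,\beta\in\Pi$ there is $c\in\Bbbk^\ast$ with $\alpha\beta-c\beta\alpha$ a linear combination of such terms. Polynomial growth (PG), in the sense of Levasseur: there exist $c>0$ and $d\in\mathbb N$ such that $\dim_\Bbbk A_n\le cn^d$ for all $n\ge1$. *)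

From HB Require Import structures.
From mathcomp Require Import all_boot all_order all_algebra.
Set Implicit Arguments. Unset Strict Implicit. Unset Printing Implicit Defensive.
Import Order.TTheory GRing.Theory Num.Theory.
Local Open Scope ring_scope.

(* [G n] is the degree-n homogeneous component; this says A = (+)_n G n is an
   N-graded k-algebra. *)
Definition nat_graded (k : fieldType) (A : algType k) (G : nat -> A -> Prop) : Prop :=
  (forall n, G n 0) /\
  (forall n x y, G n x -> G n y -> G n (x + y)) /\
  (forall n (a : k) x, G n x -> G n (a *: x)) /\
  G 0%N 1 /\
  (forall m n x y, G m x -> G n y -> G (m + n)%N (x * y)) /\
  (forall x : A, exists (N : nat) (c : nat -> A),
      (forall i, G i (c i)) /\ x = \sum_(i < N) c i) /\
  (forall (N : nat) (c : nat -> A), (forall i, G i (c i)) ->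
          \sum_(i < N) c i = 0 -> forall i, (i < N)%N -> c i = 0).

Definition monom (k : fieldType) (A : algType k) (P : Type) (f : P -> A)
  (w : seq P) : A := \prod_(p <- w) f p.

Definition standard (d : Order.disp_t) (P : finPOrderType d) (w : seq P) : bool :=
  sorted (fun x y => (x <= y)%O) w.

Definition term_val (k : fieldType) (A : algType k) (P : Type) (f : P -> A)
  (t : P * option P) : A :=
  f t.1 * (if t.2 is Some mu then f mu else 1).

Definition lower_comb (k : fieldType) (A : algType k) (d : Order.disp_t)
  (P : finPOrderType d) (f : P -> A) (a b : P) (x : A) : Prop :=
  exists s : seq (k * (P * option P)),
    (forall t, t \in s ->
       [/\ (t.2.1 < a)%O, (t.2.1 < b)%O &
           (if t.2.2 is Some mu then (t.2.1 <= mu)%O else true)]) /\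
    x = \sum_(t <- s) t.1 *: term_val f t.2.

(* Quantum graded algebra with a straightening law on (Pi, <st):
   Pi is given as a finite poset P together with an injective map f : P -> A
   and a degree function deg. *)
Definition quantum_graded_ASL (k : fieldType) (A : algType k)
  (G : nat -> A -> Prop) (d : Order.disp_t) (P : finPOrderType d)
  (f : P -> A) (deg : P -> nat) : Prop :=
  nat_graded G /\
  injective f /\
      (forall p, (0 < deg p)%N /\ G (deg p) (f p)) /\
      (forall x : A, exists s : seq (k * seq P),
          x = \sum_(t <- s) t.1 *: monom f t.2) /\
      (* (3) standard monomials are linearly independent *)
      (forall (ws : seq (seq P)) (c : seq P -> k),
          uniq ws -> all (@standard d P) ws ->
          \sum_(w <- ws) c w *: monom f w = 0 ->
          forall w, w \in ws -> c w = 0) /\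
      (* (4) straightening of incomparable pairs *)
      (forall a b : P, ~~ (a >=< b)%O -> lower_comb f a b (f a * f b)) /\
  (* (5) quantum commutation *)
      (forall a b : P, exists c : k, c != 0 /\
          lower_comb f a b (f a * f b - c *: (f b * f a))).

Definition lin_indep (k : fieldType) (A : algType k) (s : seq A) : Prop :=
  forall c : nat -> k, \sum_(i < size s) c i *: s`_i = 0 ->
    forall i, (i < size s)%N -> c i = 0.

(* Polynomial growth: exists c > 0, d with dim A_n <= c n^d for n >= 1.
   dim A_n <= m is expressed as: every linearly independent finite family in
   A_n has at most m elements. *)
Definition poly_growth (k : fieldType) (A : algType k) (G : nat -> A -> Prop) : Prop :=
  exists (c : rat) (e : nat), 0 < c /\
    forall n : nat, (1 <= n)%N -> forall s : seq A,
      (forall x, x \in s -> G n x) -> lin_indep s ->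
      (size s)%:R <= c * n%:R ^+ e.

Definition left_ideal (R : pzRingType) (I : R -> Prop) : Prop :=
  [/\ I 0, (forall x y, I x -> I y -> I (x + y)) & (forall r x, I x -> I (r * x))].
Definition right_ideal (R : pzRingType) (I : R -> Prop) : Prop :=
  [/\ I 0, (forall x y, I x -> I y -> I (x + y)) & (forall r x, I x -> I (x * r))].

Definition ACC (R : pzRingType) (ideal : (R -> Prop) -> Prop) : Prop :=
  forall I : nat -> R -> Prop, (forall n, ideal (I n)) ->
    (forall n x, I n x -> I n.+1 x) ->
    exists N, forall n, (N <= n)%N -> forall x, I n x -> I N x.

Definition noetherian (R : pzRingType) : Prop :=
  ACC (@left_ideal R) /\ ACC (@right_ideal R).

(* Fix a linear extension of <st and order words by length, then by their
   letter multiplicities read lexicographically from the lowest letter; this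
   order is well founded and compatible with concatenation.  Axioms (4) and (5)
   straighten every monomial: modulo standard monomials of smaller words, it is
   a nonzero multiple of its sorted rearrangement when its letters form a
   chain, and 0 otherwise.  Hence standard monomials span A, and every nonzero
   element has a leading standard word.
   Noetherianity: the leading words of a left (right) ideal are closed under
   enlarging their multisets of letters, so by Dickson's lemma the sets of
   leading words of an ascending chain of ideals stabilize, and then so does
   the chain.  Polynomial growth: A_n is spanned by standard monomials of
   length at most n, and a standard word is determined by its multiplicities,
   so dim A_n <= (n+1)^|Pi| <= 2^|Pi| n^|Pi|. *)

From mathcomp Require Import all_boot all_order all_algebra zify.
From Stdlib Require Import Classical ClassicalEpsilon.
Set Implicit Arguments. Unset Strict Implicit. Unset Printing Implicit Defensive.
Import Order.POrderTheory GRing.Theory Num.Theory.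

Lemma count_leq_perm_cat (T : eqType) (u v : seq T) :
  (forall p, count_mem p u <= count_mem p v) -> exists z, perm_eq (z ++ u) v.
Proof.
case/count_subseqP => s /perm_to_subseq[z perm_v] perm_us; exists z.
by rewrite perm_sym (perm_trans perm_v) // perm_catC perm_cat2l perm_sym.
Qed.

Lemma ex_min_after (a : nat -> nat) m :
  exists2 n, m < n & forall n', m < n' -> a n <= a n'.
Proof.
suff min_below v n : a n = v -> m < n -> exists2 n, m < n & forall n', m < n' -> a n <= a n'.
  exact: (min_below _ m.+1 erefl).
elim/ltn_ind: v n => v IHv n a_n lt_mn.
have [[n' lt_mn' lt_a]|no_lower] := classic (exists2 n', m < n' & a n' < a n).
  by apply: (IHv (a n')) => //; rewrite -a_n.
exists n => // n' lt_mn'; rewrite leqNgt; apply/negP => lt_a.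
by apply: no_lower; exists n'.
Qed.

Lemma nondecreasing_subseq (a : nat -> nat) : exists phi : nat -> nat,
  (forall n, phi n < phi n.+1) /\ (forall n, a (phi n) <= a (phi n.+1)).
Proof.
have /all_sig[next next_min] : forall m,
    {n | m < n /\ forall n', m < n' -> a n <= a n'}.
  move=> m; apply: constructive_indefinite_description.
  by have [n lt_mn min_n] := ex_min_after a m; exists n.
have lt_next m : m < next m by case: (next_min m).
have min_next m n' : m < n' -> a (next m) <= a n' by case: (next_min m) => _; apply.
exists (fun n => iter n.+1 next 0); split=> n; rewrite [iter n.+2 _ _]iterS.
  exact: lt_next.
by apply: min_next; rewrite iterS; apply: ltn_trans (lt_next _) (lt_next _).
Qed.

Lemma dickson_subseq m (X : nat -> nat -> nat) : exists phi : nat -> nat,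
  (forall n, phi n < phi n.+1) /\ forall n l, l < m -> X (phi n) l <= X (phi n.+1) l.
Proof.
elim: m => [|m [phi [lt_phi le_phi]]]; first by exists id.
have [psi [lt_psi le_psi]] := nondecreasing_subseq (fun n => X (phi n) m).
have homo_phi : {homo phi : i j / i < j} := homo_ltn ltn_trans lt_phi.
exists (phi \o psi); split=> [n|n l]; first exact: homo_phi.
rewrite ltnS leq_eqVlt => /orP[/eqP->|lt_lm]; first exact: le_psi.
have homo_l : {homo (fun n => X (phi n) l) : i j / i <= j >-> i <= j}.
  by apply: homo_leq => [//|i j k|i]; [exact: leq_trans | exact: le_phi].
exact/homo_l/ltnW.
Qed.

Lemma dickson m (X : nat -> nat -> nat) :
  exists i j, i < j /\ forall l, l < m -> X i l <= X j l.
Proof.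
have [phi [lt_phi le_phi]] := dickson_subseq m X.
by exists (phi 0), (phi 1); split=> // l; apply: le_phi.
Qed.

Section LinearExtension.
Variables (d : Order.disp_t) (P : finPOrderType d).

(* A linear extension of the order: [rk] is injective and strictly monotone. *)
Definition rk (p : P) : nat := #|[set q : P | (q < p)%O]| * #|P| + enum_rank p.

Definition nrk : nat := #|P| * #|P|.

Lemma rk_inj : injective rk.
Proof.
move=> p q /(congr1 (modn^~ #|P|)).
rewrite /rk !modnMDl !modn_small ?ltn_ord // => /val_inj.
exact: enum_rank_inj.
Qed.

Lemma rk_lt p q : (p < q)%O -> rk p < rk q.
Proof.
move=> lt_pq; have lt_below : #|[set r : P | (r < p)%O]| < #|[set r : P | (r < q)%O]|.
  apply: proper_card; rewrite properE; apply/andP; split.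
    by apply/subsetP => r; rewrite !inE => /lt_trans; apply.
  by apply/subsetPn; exists p; rewrite !inE ?ltxx.
rewrite /rk; have := ltn_ord (enum_rank p).
move: lt_below (enum_rank p : nat) (enum_rank q : nat).
move: #|[set r | (r < p)%O]| #|[set r | (r < q)%O]| => a b; move: #|P| => n; nia.
Qed.

Lemma rk_le p q : (p <= q)%O -> rk p <= rk q.
Proof. by rewrite le_eqVlt => /orP[/eqP->//|/rk_lt/ltnW]. Qed.

Lemma rk_lt_nrk p : rk p < nrk.
Proof.
have below : #|[set q : P | (q < p)%O]| < #|P|.
  rewrite -cardsT; apply: proper_card; apply/properP; split; first exact: subsetT.
  by exists p; rewrite !inE ?ltxx.
rewrite /rk /nrk; have := ltn_ord (enum_rank p).
move: below (enum_rank p : nat); move: #|[set q | (q < p)%O]| #|P| => a n; nia.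
Qed.

Definition le_rk (p q : P) : bool := rk p <= rk q.

Lemma le_rk_total : total le_rk.
Proof. by move=> p q; rewrite /le_rk leq_total. Qed.

Lemma le_rk_trans : transitive le_rk.
Proof. by move=> q p r; apply: leq_trans. Qed.

Lemma le_rk_anti : antisymmetric le_rk.
Proof. by move=> p q; rewrite /le_rk -eqn_leq => /eqP/rk_inj. Qed.

Definition rksort (s : seq P) : seq P := sort le_rk s.

Lemma perm_rksort s : perm_eq (rksort s) s.
Proof. by rewrite perm_sort. Qed.

Lemma mem_rksort s : rksort s =i s.
Proof. exact: perm_mem (perm_rksort s). Qed.

Lemma rksort_sorted s : sorted le_rk (rksort s).
Proof. exact: (sort_sorted le_rk_total). Qed.

Lemma rksort_standard (s : seq P) : standard s -> rksort s = s.
Proof.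
by move=> std_s; apply: (sorted_sort le_rk_trans); apply: sub_sorted std_s; apply: rk_le.
Qed.

Lemma rksort_perm s t : perm_eq s t -> rksort s = rksort t.
Proof. exact/(perm_sortP le_rk_total le_rk_trans le_rk_anti). Qed.

Lemma standard_perm_eq (s t : seq P) : standard s -> standard t -> perm_eq s t -> s = t.
Proof.
by move=> /rksort_standard {2}<- /rksort_standard {2}<-; apply: rksort_perm.
Qed.

Lemma rksort_cons p s : all (le_rk p) s -> rksort (p :: s) = p :: rksort s.
Proof.
move=> le_ps; rewrite (@rksort_perm (p :: s) (p :: rksort s)).
  apply: (sorted_sort le_rk_trans); rewrite /= path_min_sorted ?rksort_sorted //.
  by apply/allP => q; rewrite mem_rksort => /(allP le_ps).
by rewrite perm_cons perm_sym perm_rksort.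
Qed.

Definition chain (s : seq P) : bool := all (fun p => all (>=< p)%O s) s.

Lemma chain_sub (s t : seq P) : {subset s <= t} -> chain t -> chain s.
Proof.
move=> sub_st /allP ch; apply/allP => p ps; apply/allP => q qs.
exact: (allP (ch _ (sub_st _ ps))) _ (sub_st _ qs).
Qed.

Lemma standard_rksort s : standard (rksort s) = chain s.
Proof.
apply/idP/idP => [std_s | ch_s].
  apply/allP => q1; rewrite -mem_rksort => q1s; apply/allP => q2; rewrite -mem_rksort => q2s.
  have /(pairwiseP q1) pw : pairwise (fun p q => p <= q)%O (rksort s).
    by rewrite -sorted_pairwise //; exact: le_trans.
  rewrite -(nth_index q1 q1s) -(nth_index q1 q2s).
  have := index_mem q1 (rksort s); have := index_mem q2 (rksort s); rewrite q1s q2s.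
  move: (index q1 _) (index q2 _) => i j jlt ilt.
  case: (ltngtP i j) => [ij|ji|->]; last exact: comparablexx.
    by apply/orP; right; apply: pw.
  by apply/orP; left; apply: pw.
apply: (@sub_in_sorted _ (mem s) le_rk _ _ (rksort s)) (rksort_sorted s); last first.
  by apply/allP => q; rewrite mem_rksort.
move=> p q ps qs le_pq.
have /orP[//|le_qp] : (p >=< q)%O by exact: (allP (allP ch_s q qs)) p ps.
have [->//|ne_qp] := eqVneq q p.
have lt_qp : (q < p)%O by rewrite lt_neqAle ne_qp.
by have := rk_lt lt_qp; rewrite ltnNge -/(le_rk p q) le_pq.
Qed.

Lemma chain_perm s t : perm_eq s t -> chain s = chain t.
Proof. by move=> pst; rewrite -!standard_rksort (rksort_perm pst). Qed.

End LinearExtension.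

Section Lexicographic.
Variable n : nat.

Definition lexgt (u v : nat -> nat) : bool :=
  [exists i : 'I_n, [forall j : 'I_n, (j < i) ==> (u j == v j)] && (v i < u i)].

Lemma lexgtP (u v : nat -> nat) :
  reflect (exists i : 'I_n, (forall j : 'I_n, j < i -> u j = v j) /\ v i < u i)
          (lexgt u v).
Proof.
apply: (iffP existsP) => [[i /andP[/forallP eq_lt lt_i]] | [i [eq_lt lt_i]]]; exists i.
  by split=> // j ji; move: (eq_lt j); rewrite ji => /eqP.
by rewrite lt_i andbT; apply/forallP => j; apply/implyP => /eq_lt ->.
Qed.

Lemma eq_lexgt (u u' v v' : nat -> nat) :
  (forall i : 'I_n, u i = u' i) -> (forall i : 'I_n, v i = v' i) ->
  lexgt u v = lexgt u' v'.
Proof.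
move=> eq_u eq_v; apply/lexgtP/lexgtP => -[i [eq_lt lt_i]]; exists i.
  by split; [move=> j ji; rewrite -eq_u -eq_v eq_lt | rewrite -eq_u -eq_v].
by split; [move=> j ji; rewrite eq_u eq_v eq_lt | rewrite eq_u eq_v].
Qed.

Lemma lexgtxx (u : nat -> nat) : lexgt u u = false.
Proof. by apply/lexgtP => -[i [_]]; rewrite ltnn. Qed.

Lemma lexgt_trans (u v w : nat -> nat) : lexgt u v -> lexgt v w -> lexgt u w.
Proof.
move=> /lexgtP[i1 [eq1 lt1]] /lexgtP[i2 [eq2 lt2]]; apply/lexgtP.
case: (ltngtP i1 i2) => [i12|i21|/val_inj e12].
- exists i1; split; last by rewrite -eq2.
  by move=> j ji; rewrite eq1 // eq2 // (ltn_trans ji i12).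
- exists i2; split; last by rewrite eq1.
  by move=> j ji; rewrite eq1 ?eq2 // (ltn_trans ji i21).
- subst i2; exists i1; split; first by move=> j ji; rewrite eq1 ?eq2.
  exact: ltn_trans lt2 lt1.
Qed.

Lemma lexgt_add2l (w u v : nat -> nat) :
  lexgt (fun i => w i + u i) (fun i => w i + v i) = lexgt u v.
Proof.
apply/lexgtP/lexgtP => -[i [eq_lt lt_i]]; exists i; rewrite ltn_add2l in lt_i *.
  by split=> // j /eq_lt /addnI.
by split=> // j /eq_lt ->.
Qed.

Lemma lexgt_total (u v : nat -> nat) :
  [exists i : 'I_n, u i != v i] -> lexgt u v || lexgt v u.
Proof.
case/existsP=> i0 ne_i0.
have ex_i : exists i, (i < n) && (u i != v i) by exists i0; rewrite ltn_ord ne_i0.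
case: (ex_minnP ex_i) => m /andP[lt_m ne_m] min_m.
have eq_below (j : 'I_n) : j < m -> u j = v j.
  by move=> lt_jm; apply/eqP; apply: contraTT lt_jm => ne_j; rewrite -leqNgt min_m ?ltn_ord.
case: ltngtP ne_m => // lt_uv _; apply/orP; [right|left]; apply/lexgtP;
  by exists (Ordinal lt_m); split=> // j /eq_below.
Qed.

End Lexicographic.

Section WordOrder.
Variables (d : Order.disp_t) (P : finPOrderType d).
Implicit Types (x y z : seq P).

(* Words are compared by length, then by the lexicographic order on their
   letter counts listed by increasing rank: lower letters make a word smaller. *)
Definition rkcount x (i : nat) : nat := count (fun p => rk p == i) x.

Definition word_lt x y : bool :=
  (size x < size y) || ((size x == size y) && lexgt (nrk P) (rkcount x) (rkcount y)).

Lemma rkcount_cat x y i : rkcount (x ++ y) i = rkcount x i + rkcount y i.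
Proof. exact: count_cat. Qed.

Lemma rkcount_rk x p : rkcount x (rk p) = count_mem p x.
Proof. by apply: eq_count => q /=; rewrite (inj_eq (@rk_inj d P)). Qed.

Lemma rkcount_perm x x' : perm_eq x x' -> rkcount x =1 rkcount x'.
Proof. by move=> /permP eq_x i; rewrite /rkcount eq_x. Qed.

Lemma perm_rkcount x y : (forall i, i < nrk P -> rkcount x i = rkcount y i) ->
  perm_eq x y.
Proof.
by move=> eq_xy; apply/allP => p _ /=; rewrite -!rkcount_rk eq_xy ?rk_lt_nrk.
Qed.

Lemma word_lt_perm x x' y y' :
  perm_eq x x' -> perm_eq y y' -> word_lt x y = word_lt x' y'.
Proof.
move=> pxx pyy; rewrite /word_lt (perm_size pxx) (perm_size pyy).
by rewrite (@eq_lexgt _ _ (rkcount x') _ (rkcount y')) // => i; apply: rkcount_perm.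
Qed.

Lemma word_lt_trans : transitive word_lt.
Proof.
move=> y x z; rewrite /word_lt => /orP[lt1|/andP[/eqP e1 l1]] /orP[lt2|/andP[/eqP e2 l2]].
- by rewrite (ltn_trans lt1 lt2).
- by rewrite -e2 lt1.
- by rewrite e1 lt2.
- by rewrite e1 e2 eqxx (lexgt_trans l1 l2) orbT.
Qed.

Lemma word_lt_shorter x y : size x < size y -> word_lt x y.
Proof. by rewrite /word_lt => ->. Qed.

Lemma lexgt_rkcount_cat2l z x y :
  lexgt (nrk P) (rkcount (z ++ x)) (rkcount (z ++ y)) = lexgt (nrk P) (rkcount x) (rkcount y).
Proof.
by rewrite -[RHS](lexgt_add2l _ (rkcount z)); apply: eq_lexgt => i; apply: rkcount_cat.
Qed.

Lemma word_lt_cat2l z x y : word_lt (z ++ x) (z ++ y) = word_lt x y.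
Proof. by rewrite /word_lt !size_cat ltn_add2l eqn_add2l lexgt_rkcount_cat2l. Qed.

Lemma word_lt_cat2r z x y : word_lt (x ++ z) (y ++ z) = word_lt x y.
Proof.
have perm_swap (s t : seq P) : perm_eq (s ++ t) (t ++ s) by rewrite perm_catC.
by rewrite (word_lt_perm (perm_swap x z) (perm_swap y z)) word_lt_cat2l.
Qed.

Lemma word_lt_total x y : standard x -> standard y -> x != y ->
  word_lt x y || word_lt y x.
Proof.
move=> std_x std_y ne_xy; rewrite /word_lt.
case: (ltngtP (size x) (size y)) => //= _; apply: lexgt_total.
apply: contraNT ne_xy => /existsPn eq_all; apply/eqP/standard_perm_eq => //.
by apply: perm_rkcount => i lt_i; apply/eqP; have := eq_all (Ordinal lt_i); rewrite negbK.
Qed.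

(* Among words of a fixed length [L], the count vectors range over the finite
   type [{ffun 'I_(nrk P) -> 'I_L.+1}], so [word_lt] has no infinite descent. *)
Lemma Acc_word_lt_size L :
  (forall y, size y < L -> Acc word_lt y) -> forall x, size x = L -> Acc word_lt x.
Proof.
move=> acc_short.
pose above x := [set g : {ffun 'I_(nrk P) -> 'I_L.+1} |
                  lexgt (nrk P) (fun i => if insub i is Some j then g j : nat else 0)
                        (rkcount x)].
suff acc_n n x : size x = L -> #|above x| < n -> Acc word_lt x.
  by move=> x size_x; apply: (acc_n (#|above x|.+1)).
elim: n x => [//|n IHn] x size_x lt_n; constructor => y.
rewrite /word_lt size_x => /orP[/acc_short//|/andP[/eqP size_y lt_yx]].
apply: IHn => //; rewrite -ltnS; apply: leq_trans lt_n; rewrite ltnS.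
apply: proper_card; rewrite properE.
apply/andP; split.
  by apply/subsetP => g; rewrite !inE => /lexgt_trans; apply.
have bounded i : rkcount y i < L.+1 by rewrite ltnS -size_y count_size.
apply/subsetPn; exists [ffun i : 'I_(nrk P) => Ordinal (bounded i)]; rewrite !inE.
  by rewrite (@eq_lexgt _ _ (rkcount y) _ (rkcount x)) // => i; rewrite valK ffunE.
by rewrite (@eq_lexgt _ _ (rkcount y) _ (rkcount y)) ?lexgtxx // => i;
  rewrite valK ffunE.
Qed.

Lemma word_lt_wf : well_founded word_lt.
Proof.
suff acc_L L x : size x < L -> Acc word_lt x by move=> x; apply: (acc_L (size x).+1).
elim: L x => [//|L IHL] x; rewrite ltnS leq_eqVlt => /orP[/eqP|/IHL//].
exact: Acc_word_lt_size.
Qed.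

End WordOrder.

Local Open Scope ring_scope.

Section StandardSpan.
Variables (k : fieldType) (A : algType k) (d : Order.disp_t) (P : finPOrderType d).
Variable f : P -> A.
Implicit Types (Q : seq P -> Prop) (u v w x y z : seq P).

Lemma monom_nil : monom f [::] = 1.
Proof. exact: big_nil. Qed.

Lemma monom_cons p w : monom f (p :: w) = f p * monom f w.
Proof. exact: big_cons. Qed.

Lemma monom_seq1 p : monom f [:: p] = f p.
Proof. by rewrite monom_cons monom_nil mulr1. Qed.

Lemma monom_cat w1 w2 : monom f (w1 ++ w2) = monom f w1 * monom f w2.
Proof. exact: big_cat. Qed.

Definition std_span Q (a : A) : Prop :=
  exists s : seq (k * seq P), (forall t, t \in s -> standard t.2 /\ Q t.2) /\
    a = \sum_(t <- s) t.1 *: monom f t.2.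

Lemma std_span0 Q : std_span Q 0.
Proof. by exists [::]; rewrite big_nil. Qed.

Lemma std_spanD Q a b : std_span Q a -> std_span Q b -> std_span Q (a + b).
Proof.
move=> [s1 [Q1 ->]] [s2 [Q2 ->]]; exists (s1 ++ s2); split; last by rewrite big_cat.
by move=> t; rewrite mem_cat => /orP[/Q1|/Q2].
Qed.

Lemma std_spanZ Q c a : std_span Q a -> std_span Q (c *: a).
Proof.
move=> [s [Qs ->]]; exists [seq (c * t.1, t.2) | t <- s]; split.
  by move=> t /mapP[t' /Qs Qt' ->].
by rewrite big_map scaler_sumr; apply: eq_bigr => t _; rewrite scalerA.
Qed.

Lemma std_spanB Q a b : std_span Q a -> std_span Q b -> std_span Q (a - b).
Proof. by move=> Qa Qb; rewrite -scaleN1r; apply/std_spanD/std_spanZ. Qed.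

Lemma std_span_sum (I : eqType) Q (r : seq I) (F : I -> A) :
  (forall i, i \in r -> std_span Q (F i)) -> std_span Q (\sum_(i <- r) F i).
Proof.
by move=> QF; rewrite big_seq; apply: big_ind => //; [apply: std_span0 | apply: std_spanD].
Qed.

Lemma std_span_monom Q w : standard w -> Q w -> std_span Q (monom f w).
Proof.
move=> std_w Qw; exists [:: (1, w)]; rewrite big_seq1 scale1r; split=> // t.
by rewrite inE => /eqP->.
Qed.

Lemma sub_std_span Q Q' a : (forall w, Q w -> Q' w) -> std_span Q a -> std_span Q' a.
Proof. by move=> QQ' [s [Qs ->]]; exists s; split=> // t /Qs[? /QQ']. Qed.

Definition span_below x : A -> Prop := std_span (fun w => word_lt w x).

Lemma span_below_perm x x' a : perm_eq x x' -> span_below x a -> span_below x' a.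
Proof. by move=> pxx; apply: sub_std_span => w; rewrite (word_lt_perm (perm_refl w) pxx). Qed.

Definition straightens x : Prop :=
  exists c : k, (if chain x then c != 0 else c == 0) /\
    span_below x (monom f x - c *: monom f (rksort x)).

Definition straightens_below x : Prop := forall z, word_lt z x -> straightens z.

Lemma straightens_standard x : standard x -> straightens x.
Proof.
move=> std_x; exists 1; rewrite -standard_rksort rksort_standard // std_x oner_eq0.
by rewrite scale1r subrr; split=> //; apply: std_span0.
Qed.

Lemma std_span_straightens x : straightens x ->
  std_span (fun w => word_lt w x \/ perm_eq w x) (monom f x).
Proof.
move=> [c [c_chain str_x]]; rewrite -(subrK (c *: monom f (rksort x)) (monom f x)).
apply: std_spanD; first by apply: sub_std_span str_x => w; left.
move: c_chain; case: ifP => [ch_x _ | _ /eqP->]; last by rewrite scale0r; apply: std_span0.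
apply/std_spanZ/std_span_monom; first by rewrite standard_rksort.
by right; apply: perm_rksort.
Qed.

Lemma straightens_span_below x z : straightens z -> word_lt z x -> span_below x (monom f z).
Proof.
move=> /std_span_straightens str_z lt_zx; apply: sub_std_span str_z => w [lt_wz|perm_wz].
  exact: word_lt_trans lt_wz lt_zx.
by rewrite (word_lt_perm perm_wz (perm_refl x)).
Qed.

Lemma span_below_mull w x a : straightens_below (w ++ x) ->
  span_below x a -> span_below (w ++ x) (monom f w * a).
Proof.
move=> IH [s [Qs ->]]; rewrite mulr_sumr; apply: std_span_sum => t s_t.
rewrite -scalerAr -monom_cat; apply: std_spanZ.
have lt_t : word_lt (w ++ t.2) (w ++ x) by rewrite word_lt_cat2l; case: (Qs t).
exact: straightens_span_below (IH _ lt_t) lt_t.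
Qed.

Lemma span_below_mulr w x a : straightens_below (x ++ w) ->
  span_below x a -> span_below (x ++ w) (a * monom f w).
Proof.
move=> IH [s [Qs ->]]; rewrite mulr_suml; apply: std_span_sum => t s_t.
rewrite -scalerAl -monom_cat; apply: std_spanZ.
have lt_t : word_lt (t.2 ++ w) (x ++ w) by rewrite word_lt_cat2r; case: (Qs t).
exact: straightens_span_below (IH _ lt_t) lt_t.
Qed.

Definition term_word (t : P * option P) : seq P :=
  t.1 :: (if t.2 is Some mu then [:: mu] else [::]).

Lemma term_valE t : term_val f t = monom f (term_word t).
Proof. by case: t => l [mu|]; rewrite /term_val /= ?monom_cons monom_nil ?mulr1. Qed.

Lemma word_lt_term (a b : P) (t : P * option P) :
  [/\ (t.1 < a)%O, (t.1 < b)%O & (if t.2 is Some mu then (t.1 <= mu)%O else true)] ->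
  word_lt (term_word t) [:: a; b].
Proof.
case: t => l [mu|] /= [lt_la lt_lb]; last by move=> _; apply: word_lt_shorter.
move=> /rk_le le_lmu; have := rk_lt lt_la; have := rk_lt lt_lb.
move=> lt_b lt_a; apply/orP; right; rewrite eqxx /=; apply/lexgtP.
exists (Ordinal (rk_lt_nrk l)); split=> [j /= lt_j|]; rewrite /rkcount /=.
  by rewrite !(gtn_eqF lt_j) (gtn_eqF (leq_trans lt_j le_lmu))
             (gtn_eqF (ltn_trans lt_j lt_a)) (gtn_eqF (ltn_trans lt_j lt_b)).
by rewrite (gtn_eqF lt_a) (gtn_eqF lt_b) eqxx.
Qed.

Lemma span_below_lower_comb (a b : P) u L : lower_comb f a b L ->
  straightens_below (a :: b :: u) -> span_below (a :: b :: u) (L * monom f u).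
Proof.
move=> [s [low_s ->]] IH; rewrite mulr_suml; apply: std_span_sum => t s_t.
rewrite -scalerAl term_valE -monom_cat; apply: std_spanZ.
have lt_t : word_lt (term_word t.2 ++ u) ([:: a; b] ++ u).
  by rewrite word_lt_cat2r; apply: word_lt_term (low_s t s_t).
exact: straightens_span_below (IH _ lt_t) lt_t.
Qed.

Definition leading (a : A) u (c : k) : Prop :=
  [/\ standard u, c != 0 & span_below u (a - c *: monom f u)].

Lemma std_span_uniq Q (s : seq (k * seq P)) :
  (forall t, t \in s -> standard t.2 /\ Q t.2) ->
  exists W : seq (seq P), exists C : seq P -> k,
    [/\ uniq W, (forall w, w \in W -> standard w /\ Q w) &
        \sum_(t <- s) t.1 *: monom f t.2 = \sum_(w <- W) C w *: monom f w].
Proof.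
elim: s => [|t s IHs] Qs; first by exists [::], (fun _ => 0); rewrite !big_nil.
have [|W [C [uniq_W QW eq_W]]] := IHs.
  by move=> t' s_t'; apply: Qs; rewrite inE s_t' orbT.
have [std_t Q_t] := Qs t (mem_head _ _); rewrite big_cons eq_W.
case W_t : (t.2 \in W).
  exists W, (fun w => if w == t.2 then C w + t.1 else C w); split=> //.
  rewrite (bigD1_seq t.2) //= (bigD1_seq t.2 W_t uniq_W) /= eqxx addrA scalerDl.
  by rewrite [t.1 *: _ + _]addrC; congr (_ + _); apply: eq_bigr => w /negbTE ->.
exists (t.2 :: W), (fun w => if w == t.2 then t.1 else C w); split.
- by rewrite /= W_t.
- by move=> w; rewrite inE => /orP[/eqP->|/QW].
- rewrite big_cons eqxx; congr (_ + _); rewrite big_seq_cond [RHS]big_seq_cond.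
  apply: eq_bigr => w /andP[W_w _]; rewrite ifF //.
  by apply: contraFF W_t => /eqP <-.
Qed.

Lemma ex_word_lt_max (W : seq (seq P)) : W != [::] -> (forall w, w \in W -> standard w) ->
  exists2 w0, w0 \in W & forall w, w \in W -> w != w0 -> word_lt w w0.
Proof.
elim: W => [//|w W IHW] _ std_W.
have [->|W_neq0] := eqVneq W [::].
  by exists w => [|w']; rewrite ?mem_head // inE => /eqP->; rewrite eqxx.
have [|w0 W_w0 max_w0] := IHW W_neq0.
  by move=> w' W_w'; rewrite std_W // inE W_w' orbT.
have W_w0' : w0 \in w :: W by rewrite inE W_w0 orbT.
have [eq_w|ne_w] := eqVneq w w0.
  by exists w0 => // w'; rewrite inE => /orP[/eqP->|/max_w0//]; rewrite eq_w eqxx.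
case/orP: (word_lt_total (std_W _ (mem_head _ _)) (std_W _ W_w0') ne_w) => [lt_w|lt_w0].
  by exists w0 => // w'; rewrite inE => /orP[/eqP->|/max_w0].
exists w; first exact: mem_head.
move=> w'; rewrite inE => /orP[/eqP->|W_w']; first by rewrite eqxx.
move=> _; have [->//|ne_w'] := eqVneq w' w0.
exact: word_lt_trans (max_w0 _ W_w' ne_w') lt_w0.
Qed.

Lemma leading_or_eq0 Q a : std_span Q a -> a = 0 \/ exists u c, Q u /\ leading a u c.
Proof.
move=> [s [Qs ->]]; have [W [C [uniq_W QW ->]]] := std_span_uniq Qs.
have -> : \sum_(w <- W) C w *: monom f w =
    \sum_(w <- [seq w <- W | C w != 0]) C w *: monom f w.
  rewrite big_filter [RHS]big_mkcond; apply: eq_bigr => w _.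
  by case: eqVneq => [->|]; rewrite ?scale0r.
set W1 := [seq w <- W | C w != 0].
have [->|W1_neq0] := eqVneq W1 [::]; first by left; rewrite big_nil.
right; have std_W1 w : w \in W1 -> standard w.
  by rewrite mem_filter => /andP[_ /QW[]].
have [w0 W1_w0 max_w0] := ex_word_lt_max W1_neq0 std_W1.
move: (W1_w0); rewrite mem_filter => /andP[C_w0 /QW[std_w0 Q_w0]].
exists w0, (C w0); split=> //; split=> //.
rewrite (bigD1_seq w0) ?filter_uniq //= addrC addrK -big_filter.
apply: std_span_sum => w; rewrite mem_filter => /andP[ne_w W1_w].
by apply/std_spanZ/std_span_monom; [apply: std_W1 | apply: max_w0].
Qed.

End StandardSpan.

Section LeadingWordChain.
Variables (k : fieldType) (A : algType k) (d : Order.disp_t) (P : finPOrderType d).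
Variable f : P -> A.
Hypothesis std_spanT : forall a : A, std_span f (fun _ => True) a.
Variable I : nat -> A -> Prop.
Hypothesis I0 : forall n, I n 0.
Hypothesis ID : forall n a b, I n a -> I n b -> I n (a + b).
Hypothesis IZ : forall n c a, I n a -> I n (c *: a).
Hypothesis I_leading_up : forall n a u c v, I n a -> leading f a u c -> standard v ->
  (forall p, count_mem p u <= count_mem p v)%N -> exists b c', I n b /\ leading f b v c'.
Hypothesis I_succ : forall n a, I n a -> I n.+1 a.

Definition leading_in n (u : seq P) : Prop := exists a c, I n a /\ leading f a u c.

Lemma I_mono n m : (n <= m)%N -> forall a, I n a -> I m a.
Proof.
move=> le_nm a In_a; rewrite -(subnKC le_nm).
by elim: (m - n)%N => [|j IHj]; rewrite ?addn0 // addnS; apply: I_succ.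
Qed.

Lemma leading_in_mono n m u : (n <= m)%N -> leading_in n u -> leading_in m u.
Proof. by move=> le_nm [a [c [In_a lead_a]]]; exists a, c; split=> //; apply: I_mono In_a. Qed.

(* Dickson's lemma on letter multiplicities: a strictly growing sequence of
   sets of leading words would contain two words [u_i], [u_j], [i < j], with
   [u_i] dividing [u_j] as a multiset. *)
Lemma leading_in_stationary :
  exists N, forall n, (N <= n)%N -> forall u, leading_in n u -> leading_in N u.
Proof.
apply: NNPP => not_stat.
have new_word N : exists nu : nat * seq P,
    [/\ (N <= nu.1)%N, leading_in nu.1 nu.2 & ~ leading_in N nu.2].
  apply: NNPP => no_new; apply: not_stat; exists N => n le_Nn u lead_u.
  by apply: NNPP => not_lead; apply: no_new; exists (n, u).
have /all_sig[next next_new] := fun N => constructive_indefinite_description _ (new_word N).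
pose N i := iter i (fun N => (next N).1) 0%N.
pose u i := (next (N i)).2.
have N_mono : {homo N : i j / (i <= j)%N}.
  by apply: homo_leq => [//|??? /leq_trans|i]; [apply | case: (next_new (N i))].
have lead_u i : leading_in (N i.+1) (u i) by case: (next_new (N i)).
have nlead_u i : ~ leading_in (N i) (u i) by case: (next_new (N i)).
have [i [j [lt_ij le_count]]] := dickson (nrk P) (fun i => rkcount (u i)).
have [a [c [Ia lead_a]]] := lead_u i.
have std_uj : standard (u j) by have [? [? [_ []]]] := lead_u j.
have [|b [c' [Ib lead_b]]] := I_leading_up Ia lead_a std_uj.
  by move=> p; rewrite -!rkcount_rk le_count ?rk_lt_nrk.
by apply: (nlead_u j); apply: (leading_in_mono (N_mono _ _ lt_ij)); exists b, c'.
Qed.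

(* Subtracting a suitable element of [I N] lowers the leading word of an
   element of [I n]; conclude by well-founded induction on that word. *)
Lemma I_stationary n N : (forall a, I N a -> I n a) ->
  (forall u, leading_in n u -> leading_in N u) -> forall a, I n a -> I N a.
Proof.
move=> I_Nn lead_nN a In_a.
case: (leading_or_eq0 (std_spanT a)) => [->|[u [c [_ lead_a]]]]; first exact: I0.
elim/(well_founded_ind (@word_lt_wf d P)): u a c In_a lead_a => u IHu a c In_a lead_a.
have [b [c' [IN_b [_ c'_neq0 low_b]]]] : leading_in N u by apply: lead_nN; exists a, c.
case: lead_a => _ c_neq0 low_a.
set a' := a - (c / c') *: b.
have In_a' : I n a' by apply: ID => //; rewrite -scaleN1r; apply/IZ/IZ/I_Nn.
have low_a' : span_below f u a'.
  have -> : a' = (a - c *: monom f u) - (c / c') *: (b - c' *: monom f u).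
    by rewrite /a' scalerBr scalerA divfK // opprB addrA subrK.
  exact/std_spanB/std_spanZ.
rewrite -(subrK ((c / c') *: b) a) -/a'; apply: ID; last exact: IZ.
case: (leading_or_eq0 low_a') => [->|[u' [c'' [lt_u' lead_a']]]]; first exact: I0.
exact: IHu lt_u' a' c'' In_a' lead_a'.
Qed.

Lemma leading_chain_stationary :
  exists N, forall n, (N <= n)%N -> forall a, I n a -> I N a.
Proof.
have [N stat_N] := leading_in_stationary.
by exists N => n le_Nn; apply: I_stationary; [apply: I_mono | apply: stat_N].
Qed.

End LeadingWordChain.

Section QuantumASL.
Variables (k : fieldType) (A : algType k) (d : Order.disp_t) (P : finPOrderType d).
Variable f : P -> A.
Hypothesis straighten_incomparable :
  forall a b : P, ~~ (a >=< b)%O -> lower_comb f a b (f a * f b).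
Hypothesis straighten_commutator : forall a b : P, exists c : k, c != 0 /\
  lower_comb f a b (f a * f b - c *: (f b * f a)).

Lemma straightens_incomparable a b u : ~~ (a >=< b)%O ->
  straightens_below f (a :: b :: u) -> straightens f (a :: b :: u).
Proof.
move=> inc_ab IH; exists 0; split.
  case: ifP => // ch; case/negP: inc_ab.
  by apply: (allP (allP ch b _)); rewrite !inE eqxx ?orbT.
rewrite scale0r subr0 !monom_cons mulrA.
exact: span_below_lower_comb (straighten_incomparable inc_ab) IH.
Qed.

(* Axiom (5) trades [f a * f b] for a multiple of [f b * f a] modulo lower
   terms; then [a :: u] is straightened, being shorter. *)
Lemma straightens_descent a b u : (b < a)%O -> standard (b :: u) ->
  straightens_below f (a :: b :: u) -> straightens f (a :: b :: u).
Proof.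
move=> lt_ba std_bu IH; have [c0 [c0_neq0 low_c0]] := straighten_commutator a b.
set L := f a * f b - c0 *: (f b * f a) in low_c0.
have swap_ab : monom f (a :: b :: u) = c0 *: (f b * monom f (a :: u)) + L * monom f u.
  by rewrite /L mulrBl -scalerAl !monom_cons !mulrA addrC subrK.
have perm_ab : perm_eq (b :: a :: u) (a :: b :: u) by apply/permP => q /=; rewrite addnCA.
have [c1 [c1_chain str_au]] := IH _ (@word_lt_shorter _ _ (a :: u) (a :: b :: u) (ltnSn _)).
have str_bau : span_below f (a :: b :: u)
    (f b * (monom f (a :: u) - c1 *: monom f (rksort (a :: u)))).
  apply: (span_below_perm perm_ab); rewrite -(monom_seq1 f b).
  apply: (@span_below_mull _ _ _ _ _ [:: b]) => // z lt_z; apply: IH.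
  by rewrite -(word_lt_perm (perm_refl z) perm_ab).
have low_L := span_below_lower_comb low_c0 IH.
case ch_au : (chain (a :: u)) in c1_chain.
  have b_min : all (le_rk b) (a :: u).
    rewrite /= /le_rk (rk_le (ltW lt_ba)) /=.
    by apply/allP => q /(allP (order_path_min le_trans std_bu)) /rk_le.
  have sort_bau : rksort (a :: b :: u) = b :: rksort (a :: u).
    by rewrite -(rksort_perm perm_ab) rksort_cons.
  have ch_abu : chain (a :: b :: u).
    rewrite -standard_rksort sort_bau /standard /= path_min_sorted.
      by rewrite -/(standard _) standard_rksort.
    apply/allP => q; rewrite mem_rksort inE => /orP[/eqP->|]; first exact: ltW.
    exact: (allP (order_path_min le_trans std_bu)).
  exists (c0 * c1); rewrite ch_abu mulf_neq0 //; split=> //.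
  have -> : monom f (a :: b :: u) - (c0 * c1) *: monom f (rksort (a :: b :: u)) =
      c0 *: (f b * (monom f (a :: u) - c1 *: monom f (rksort (a :: u)))) + L * monom f u.
    by rewrite swap_ab sort_bau (monom_cons f b) mulrBr scalerBr -scalerAr scalerA addrAC.
  by apply: std_spanD => //; apply: std_spanZ.
have ch_abu : chain (a :: b :: u) = false.
  by apply: contraFF ch_au; apply: chain_sub => q; rewrite !inE => /orP[->|->]; rewrite ?orbT.
exists 0; rewrite ch_abu eqxx scale0r subr0 swap_ab; split=> //.
move: str_bau; rewrite (eqP c1_chain) scale0r subr0 => str_bau.
by apply: std_spanD => //; apply: std_spanZ.
Qed.

Lemma straightens_cons_standard a u : standard u ->
  straightens_below f (a :: u) -> straightens f (a :: u).
Proof.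
case: u => [|b u] std_u IH; first exact: straightens_standard.
have [le_ab|nle_ab] := boolP (a <= b)%O.
  by apply: straightens_standard; rewrite /standard /= le_ab.
have [le_ba|nle_ba] := boolP (b <= a)%O.
  apply: straightens_descent => //; rewrite lt_neqAle le_ba andbT.
  by apply: contraNneq nle_ab => ->.
by apply: straightens_incomparable => //; rewrite /Order.comparable negb_or nle_ab.
Qed.

Lemma straightening x : straightens f x.
Proof.
elim/(well_founded_ind (@word_lt_wf d P)): x => -[|a y] IH.
  exact: straightens_standard.
have [cy [cy_chain str_y]] := IH y (@word_lt_shorter _ _ y (a :: y) (ltnSn _)).
have str_ay : span_below f (a :: y) (f a * (monom f y - cy *: monom f (rksort y))).
  by rewrite -(monom_seq1 f a); apply: (@span_below_mull _ _ _ _ _ [:: a]).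
have split_a : monom f (a :: y) =
    cy *: (f a * monom f (rksort y)) + f a * (monom f y - cy *: monom f (rksort y)).
  by rewrite monom_cons mulrBr -scalerAr addrC subrK.
case ch_y : (chain y) in cy_chain.
  have perm_a : perm_eq (a :: rksort y) (a :: y) by rewrite perm_cons perm_rksort.
  have [c' [c'_chain str_a]] : straightens f (a :: rksort y).
    apply: straightens_cons_standard; first by rewrite standard_rksort.
    by move=> z lt_z; apply: IH; rewrite -(word_lt_perm (perm_refl z) perm_a).
  exists (cy * c'); split.
    by rewrite -(chain_perm perm_a); case: ifP c'_chain => _ c'_eq;
      rewrite ?mulf_neq0 // (eqP c'_eq) mulr0.
  rewrite (rksort_perm perm_a) in str_a.
  have -> : monom f (a :: y) - (cy * c') *: monom f (rksort (a :: y)) =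
      cy *: (monom f (a :: rksort y) - c' *: monom f (rksort (a :: y))) +
      f a * (monom f y - cy *: monom f (rksort y)).
    by rewrite {1}split_a monom_cons scalerBr scalerA addrAC.
  by apply: std_spanD => //; apply/std_spanZ/(span_below_perm perm_a).
have ch_ay : chain (a :: y) = false.
  by apply: contraFF ch_y; apply: chain_sub => q q_y; rewrite inE q_y orbT.
exists 0; rewrite ch_ay eqxx scale0r subr0; split=> //.
by move: str_ay; rewrite split_a (eqP cy_chain) !scale0r add0r.
Qed.

Hypothesis generated : forall a : A, exists s : seq (k * seq P),
  a = \sum_(t <- s) t.1 *: monom f t.2.

Lemma std_span_all a : std_span f (fun _ => True) a.
Proof.
have [s ->] := generated a; apply: std_span_sum => t _; apply: std_spanZ.
exact: sub_std_span (std_span_straightens (straightening t.2)).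
Qed.

Lemma straightens_perm_standard w v : perm_eq w v -> standard v ->
  exists2 c, c != 0 & span_below f v (monom f w - c *: monom f v).
Proof.
move=> perm_wv std_v; have [c [c_chain str_w]] := straightening w.
rewrite (rksort_perm perm_wv) rksort_standard // in str_w.
have ch_w : chain w by rewrite -standard_rksort (rksort_perm perm_wv) rksort_standard.
by exists c; [rewrite ch_w in c_chain | apply: span_below_perm perm_wv str_w].
Qed.

Lemma leading_mull a u c v : leading f a u c -> standard v ->
  (forall p, count_mem p u <= count_mem p v)%N ->
  exists z c', leading f (monom f z * a) v c'.
Proof.
move=> [_ c_neq0 low_a] std_v /count_leq_perm_cat[z perm_zu].
have [c' c'_neq0 str_zu] := straightens_perm_standard perm_zu std_v.
exists z, (c * c'); split=> //; first by rewrite mulf_neq0.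
have -> : monom f z * a - (c * c') *: monom f v =
    c *: (monom f (z ++ u) - c' *: monom f v) + monom f z * (a - c *: monom f u).
  by rewrite monom_cat mulrBr scalerBr scalerA -scalerAr [RHS]addrC addrA subrK.
apply: std_spanD; first exact: std_spanZ.
by apply: (span_below_perm perm_zu); apply: span_below_mull => // z' _; apply: straightening.
Qed.

Lemma leading_mulr a u c v : leading f a u c -> standard v ->
  (forall p, count_mem p u <= count_mem p v)%N ->
  exists z c', leading f (a * monom f z) v c'.
Proof.
move=> [_ c_neq0 low_a] std_v /count_leq_perm_cat[z perm_zu].
have perm_uz : perm_eq (u ++ z) v by rewrite perm_catC.
have [c' c'_neq0 str_uz] := straightens_perm_standard perm_uz std_v.
exists z, (c * c'); split=> //; first by rewrite mulf_neq0.
have -> : a * monom f z - (c * c') *: monom f v =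
    c *: (monom f (u ++ z) - c' *: monom f v) + (a - c *: monom f u) * monom f z.
  by rewrite monom_cat mulrBl scalerBr scalerA -scalerAl [RHS]addrC addrA subrK.
apply: std_spanD; first exact: std_spanZ.
by apply: (span_below_perm perm_uz); apply: span_below_mulr => // z' _; apply: straightening.
Qed.

Lemma left_ideal_ACC : ACC (@left_ideal A).
Proof.
move=> I ideal_I I_succ; apply: (leading_chain_stationary std_span_all) => // n.
- by case: (ideal_I n).
- by case: (ideal_I n).
- move=> c a; have -> : c *: a = (c *: 1) * a by rewrite -scalerAl mul1r.
  by case: (ideal_I n) => _ _; apply.
- move=> a u c v In_a lead_a std_v le_uv.
  have [z [c' lead_za]] := leading_mull lead_a std_v le_uv.
  by exists (monom f z * a), c'; split=> //; case: (ideal_I n) => _ _; apply.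
Qed.

Lemma right_ideal_ACC : ACC (@right_ideal A).
Proof.
move=> I ideal_I I_succ; apply: (leading_chain_stationary std_span_all) => // n.
- by case: (ideal_I n).
- by case: (ideal_I n).
- move=> c a; have -> : c *: a = a * (c *: 1) by rewrite -scalerAr mulr1.
  by case: (ideal_I n) => _ _; apply.
- move=> a u c v In_a lead_a std_v le_uv.
  have [z [c' lead_az]] := leading_mulr lead_a std_v le_uv.
  by exists (a * monom f z), c'; split=> //; case: (ideal_I n) => _ _; apply.
Qed.

End QuantumASL.

Section FiniteSpan.
Variables (k : fieldType) (V : lmodType k).
Implicit Types (t : seq V) (v : V).

Definition in_span t v : Prop := exists a : nat -> k, v = \sum_(j < size t) a j *: t`_j.

Lemma in_span0 t : in_span t 0.
Proof. by exists (fun _ => 0); rewrite big1 // => j _; rewrite scale0r. Qed.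

Lemma in_spanD t v w : in_span t v -> in_span t w -> in_span t (v + w).
Proof.
move=> [a ->] [b ->]; exists (fun j => a j + b j).
by rewrite -big_split; apply: eq_bigr => j _; rewrite scalerDl.
Qed.

Lemma in_spanZ t c v : in_span t v -> in_span t (c *: v).
Proof.
move=> [a ->]; exists (fun j => c * a j).
by rewrite scaler_sumr; apply: eq_bigr => j _; rewrite scalerA.
Qed.

Lemma in_span_mem t v : v \in t -> in_span t v.
Proof.
move=> t_v; exists (fun j => if j == index v t then 1 else 0).
have lt_v : (index v t < size t)%N by rewrite index_mem.
rewrite (bigD1 (Ordinal lt_v)) //= eqxx scale1r nth_index // big1 ?addr0 // => j ne_j.
by rewrite ifF ?scale0r //; apply: contraNF ne_j => /eqP eq_j; apply/eqP/val_inj.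
Qed.

Lemma in_span_sum (I : eqType) t (r : seq I) (F : I -> V) :
  (forall i, i \in r -> in_span t (F i)) -> in_span t (\sum_(i <- r) F i).
Proof.
by move=> tF; rewrite big_seq; apply: big_ind => //; [apply: in_span0 | apply: in_spanD].
Qed.

End FiniteSpan.

Lemma lin_indep_size_le (k : fieldType) (A : algType k) (s t : seq A) :
  lin_indep s -> (forall v, v \in s -> in_span t v) -> (size s <= size t)%N.
Proof.
move=> indep_s span_s; rewrite leqNgt; apply/negP => lt_ts.
have /all_sig[a s_a] : forall i : 'I_(size s),
    {a : nat -> k | s`_i = \sum_(j < size t) a j *: t`_j}.
  by move=> i; apply/constructive_indefinite_description/span_s/mem_nth.
pose M : 'M[k]_(size s, size t) := \matrix_(i, j) a i j.
have /rowV0Pn[v /sub_kermxP vM0 v_neq0] : kermx M != 0.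
  rewrite -mxrank_eq0 mxrank_ker subn_eq0 -ltnNge.
  exact: leq_ltn_trans (rank_leq_col M) lt_ts.
pose c (i : nat) := if insub i is Some i' then v 0 i' else 0.
have cE (i : 'I_(size s)) : c i = v 0 i by rewrite /c valK.
have dep_s : \sum_(i < size s) c i *: s`_i = 0.
  transitivity (\sum_(j < size t) (v *m M) 0 j *: t`_j); last first.
    by rewrite vM0 big1 // => j _; rewrite mxE scale0r.
  under eq_bigr => i _ do rewrite cE s_a scaler_sumr.
  rewrite exchange_big /=; apply: eq_bigr => j _.
  rewrite !mxE scaler_suml; apply: eq_bigr => i _.
  by rewrite mxE scalerA.
move/eqP: v_neq0; apply; apply/rowP => i; rewrite mxE -cE.
exact: indep_s dep_s _ (ltn_ord i).
Qed.

Section PolynomialGrowth.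
Variables (k : fieldType) (A : algType k) (G : nat -> A -> Prop).
Variables (d : Order.disp_t) (P : finPOrderType d) (f : P -> A) (deg : P -> nat).
Hypothesis G0 : forall n, G n 0.
Hypothesis GD : forall n a b, G n a -> G n b -> G n (a + b).
Hypothesis GZ : forall n (c : k) a, G n a -> G n (c *: a).
Hypothesis G1 : G 0%N 1.
Hypothesis GM : forall m n a b, G m a -> G n b -> G (m + n)%N (a * b).
Hypothesis G_direct : forall (N : nat) (a : nat -> A), (forall i, G i (a i)) ->
  \sum_(i < N) a i = 0 -> forall i, (i < N)%N -> a i = 0.
Hypothesis deg_f : forall p, (0 < deg p)%N /\ G (deg p) (f p).
Hypothesis std_spanT : forall a : A, std_span f (fun _ => True) a.

Definition wdeg (w : seq P) : nat := (\sum_(p <- w) deg p)%N.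

Lemma G_monom w : G (wdeg w) (monom f w).
Proof.
elim: w => [|p w IHw]; first by rewrite /wdeg big_nil monom_nil.
by rewrite /wdeg big_cons monom_cons; apply: GM => //; case: (deg_f p).
Qed.

Lemma size_le_wdeg w : (size w <= wdeg w)%N.
Proof.
elim: w => [|p w IHw]; rewrite /wdeg ?big_nil // big_cons -/(wdeg w) /=.
by have := (deg_f p).1; lia.
Qed.

Lemma G_sum n (I : eqType) (r : seq I) (F : I -> A) :
  (forall i, i \in r -> G n (F i)) -> G n (\sum_(i <- r) F i).
Proof. by move=> GF; rewrite big_seq; apply: big_ind => //; apply: GD. Qed.

(* Splitting an expansion of [a] by the degrees of its words, the components
   of degree [m != n] vanish because the sum of the [G]'s is direct. *)
Lemma std_span_homogeneous n a : G n a ->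
  std_span f (fun w => wdeg w = n) a.
Proof.
move=> Gn_a; have [s [std_s eq_a]] := std_spanT a.
pose D := (n + \sum_(t <- s) wdeg t.2).+1.
have lt_nD : (n < D)%N by rewrite ltnS leq_addr.
have lt_sD t : t \in s -> (wdeg t.2 < D)%N.
  move=> s_t; rewrite ltnS (leq_trans _ (leq_addl _ _)) //.
  by rewrite (big_rem t) //= leq_addr.
have sum_delta m (b : A) : (m < D)%N -> \sum_(i < D) (if m == i then b else 0) = b.
  move=> lt_mD; rewrite (bigD1 (Ordinal lt_mD)) //= eqxx big1 ?addr0 // => i ne_i.
  by rewrite ifF //; apply: contraNF ne_i => /eqP eq_i; apply/eqP/val_inj.
pose comp i := \sum_(t <- s | wdeg t.2 == i) t.1 *: monom f t.2.
have G_comp i : G i (comp i - (if n == i then a else 0)).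
  apply: GD; last by rewrite -scaleN1r; apply: GZ; case: eqP => [<-|].
  rewrite /comp -big_filter; apply: G_sum => t; rewrite mem_filter => /andP[/eqP <- _].
  exact/GZ/G_monom.
have sum_comp : \sum_(i < D) (comp i - (if n == i then a else 0)) = 0.
  rewrite big_split /= sumrN sum_delta //; apply/eqP.
  rewrite subr_eq0 [X in _ == X]eq_a; apply/eqP.
  under eq_bigr => i _ do rewrite /comp big_mkcond.
  rewrite exchange_big /= big_seq [RHS]big_seq; apply: eq_bigr => t s_t.
  by rewrite sum_delta ?lt_sD.
have := G_direct G_comp sum_comp lt_nD; rewrite eqxx => /eqP; rewrite subr_eq0 => /eqP <-.
exists [seq t <- s | wdeg t.2 == n]; split; last by rewrite big_filter.
by move=> t; rewrite mem_filter => /andP[/eqP wdeg_t /std_s[]].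
Qed.

Definition mult_word n (g : {ffun P -> 'I_n.+1}) : seq P :=
  flatten [seq nseq (g p) p | p <- enum P].

Lemma count_mult_word n (g : {ffun P -> 'I_n.+1}) q : count_mem q (mult_word g) = g q.
Proof.
rewrite count_flatten -map_comp sumnE big_map big_enum /=.
rewrite (bigD1 q) //= count_nseq /= eqxx mul1n big1 ?addn0 // => p ne_pq.
by rewrite count_nseq /= (negbTE ne_pq).
Qed.

Definition std_monoms n : seq A :=
  [seq monom f (rksort (mult_word g)) | g <- enum {ffun P -> 'I_n.+1}].

Lemma size_std_monoms n : size (std_monoms n) = (n.+1 ^ #|P|)%N.
Proof. by rewrite size_map -cardT card_ffun card_ord. Qed.

(* A standard word is determined by its letter multiplicities. *)
Lemma std_monoms_mem n w : standard w -> (size w <= n)%N -> monom f w \in std_monoms n.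
Proof.
move=> std_w le_wn.
have lt_count p : (count_mem p w < n.+1)%N by rewrite ltnS (leq_trans (count_size _ _)).
pose g : {ffun P -> 'I_n.+1} := [ffun p => Ordinal (lt_count p)].
have perm_gw : perm_eq (mult_word g) w.
  by apply/allP => p _; rewrite /= count_mult_word ffunE.
by rewrite -(rksort_standard std_w) -(rksort_perm perm_gw); apply/map_f; rewrite mem_enum.
Qed.

Lemma poly_growth_std : poly_growth G.
Proof.
exists (2 ^ #|P|)%N%:R, #|P|; split; first by rewrite ltr0n expn_gt0.
move=> n ge1_n s G_s indep_s.
have le_s : (size s <= size (std_monoms n))%N.
  apply: (lin_indep_size_le indep_s) => a s_a.
  have [r [std_r ->]] := std_span_homogeneous (G_s a s_a).
  apply: in_span_sum => t r_t; apply/in_spanZ/in_span_mem.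
  have [std_t wdeg_t] := std_r t r_t.
  by apply: std_monoms_mem => //; rewrite -wdeg_t size_le_wdeg.
rewrite -natrX -natrM ler_nat (leq_trans le_s) // size_std_monoms -expnMn.
by have [->//|pos_P] := posnP #|P|; rewrite leq_exp2r //; lia.
Qed.

End PolynomialGrowth.

Theorem lemma1p2p2 (k : fieldType) (A : algType k) (G : nat -> A -> Prop)
  (d : Order.disp_t) (P : finPOrderType d) (f : P -> A) (deg : P -> nat) :
  quantum_graded_ASL G f deg -> noetherian A /\ poly_growth G.
Proof.
move=> [graded [_ [deg_f [generated [_ [str_inc str_comm]]]]]].
have [G0 [GD [GZ [G1 [GM [_ G_direct]]]]]] := graded.
have std_spanT := std_span_all str_inc str_comm generated.
split; first by split; [apply: left_ideal_ACC generated | apply: right_ideal_ACC generated].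
exact: poly_growth_std G0 GD GZ G1 GM G_direct deg_f std_spanT.
Qed.
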